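(* Let $\mathcal{H}$, $\mathcal{F}$, $v_f$ and the greedy scheme be as in the context, with constant $c\ge 1$ and non-negative convex penalty $w$, and let $f^\star$ be any element of the Hilbert space. Then for every $m\ge 1$, $$\|f^\star-f_m\|^2+w(v_m)\le \inf_{f\in\mathcal{F}}\Big\{\|f^\star-f\|^2+w(cv_f)+\frac{4b_f}{m}\Big\},\qquad b_f=c^2v_f^2+2v_f\|f^\star\|(c+1)-\|f\|^2 .$$ Moreover, $$\|f^\star-f_m\|^2+w(v_m)\le \inf_{f\in\mathcal{F}}\inf_{\delta>0}\Big\{(1+\delta)\|f^\star-f\|^2+w(cv_f)+\frac{4(1+\delta)\delta^{-1}(c+1)^2v_f^2}{m}\Big\},$$ and consequently $$\|f^\star-f_m\|^2+w(v_m)\le \inf_{f\in\mathcal{F}}\Big\{\Big(\|f^\star-f\|+\frac{2(c+1)v_f}{\sqrt m}\Big)^2+w(cv_f)\Big\}.$$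
   Context: Let $(\mathcal{V},\langle\cdot,\cdot\rangle)$ be a real Hilbert space with norm $\|\cdot\|$ (in the paper, $L^2(P)$ for a probability measure $P$ on $[-1,1]^d$). Let $\mathcal{H}\subset\mathcal{V}$ be a dictionary with $\|h\|\le 1$ for all $h\in\mathcal{H}$, $\mathcal{H}=-\mathcal{H}$ and $0\in\mathcal{H}$. Let $\mathcal{F}$ be the set of finite combinations $f=\sum_{h\in\mathcal{H}}\beta_h h$ with $\beta_h\ge 0$, and for $f\in\mathcal{F}$ let $v_f=\inf\{\sum_h\beta_h : f=\sum_h\beta_h h,\ \beta_h\ge0\}$. Let $w:\mathbb{R}\to[0,\infty)$ be convex and $c\ge1$. Greedy scheme: $f_0=0$, $v_0=0$. For $m=1,2,\dots$: choose $h_m\in\mathcal{H}$ with $\langle h_m,f^\star-f_{m-1}\rangle\ge \frac1c\sup_{h\in\mathcal{H}}\langle h,f^\star-f_{m-1}\rangle$; then choose $\alpha_m\in[0,1]$ and $\beta_{m,m}\ge0$ attaining $\inf_{\alpha\in[0,1],\beta\ge0}\big[\|f^\star-(1-\alpha)f_{m-1}-\beta h_m\|^2+w((1-\alpha)v_{m-1}+\beta)\big]$, and set $f_m=(1-\alpha_m)f_{m-1}+\beta_{m,m}h_m$, $v_m=(1-\alpha_m)v_{m-1}+\beta_{m,m}$. *)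

From Stdlib Require Import Reals Lra List.
Open Scope R_scope.

Record Hilbert := {
  hcar :> Type;
  hadd : hcar -> hcar -> hcar;
  hopp : hcar -> hcar;
  hzero : hcar;
  hscal : R -> hcar -> hcar;
  hinner : hcar -> hcar -> R;
  hadd_assoc : forall x y z, hadd x (hadd y z) = hadd (hadd x y) z;
  hadd_comm : forall x y, hadd x y = hadd y x;
  hadd_zero : forall x, hadd x hzero = x;
  hadd_opp : forall x, hadd x (hopp x) = hzero;
  hscal_assoc : forall a b x, hscal a (hscal b x) = hscal (a * b) x;
  hscal_one : forall x, hscal 1 x = x;
  hscal_distr_v : forall a x y, hscal a (hadd x y) = hadd (hscal a x) (hscal a y);
  hscal_distr_s : forall a b x, hscal (a + b) x = hadd (hscal a x) (hscal b x);
  hinner_sym : forall x y, hinner x y = hinner y x;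
  hinner_add_l : forall x y z, hinner (hadd x y) z = hinner x z + hinner y z;
  hinner_scal_l : forall a x y, hinner (hscal a x) y = a * hinner x y;
  hinner_pos : forall x, 0 <= hinner x x;
  hinner_def : forall x, hinner x x = 0 -> x = hzero;
  hcomplete : forall u : nat -> hcar,
    (forall eps, 0 < eps -> exists N, forall n m, (N <= n)%nat -> (N <= m)%nat ->
        sqrt (hinner (hadd (u n) (hopp (u m))) (hadd (u n) (hopp (u m)))) < eps) ->
    exists l, forall eps, 0 < eps -> exists N, forall n, (N <= n)%nat ->
        sqrt (hinner (hadd (u n) (hopp l)) (hadd (u n) (hopp l))) < eps
}.

Arguments hadd {h}. Arguments hopp {h}. Arguments hzero {h}.
Arguments hscal {h}. Arguments hinner {h}.

Definition hsub {V : Hilbert} (x y : V) : V := hadd x (hopp y).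
Definition hnorm {V : Hilbert} (x : V) : R := sqrt (hinner x x).

Definition comb {V : Hilbert} (l : list (R * V)) : V :=
  fold_right (fun p acc => hadd (hscal (fst p) (snd p)) acc) hzero l.
Definition coef_sum {V : Hilbert} (l : list (R * V)) : R :=
  fold_right (fun p acc => fst p + acc) 0 l.

Definition is_rep {V : Hilbert} (Hd : V -> Prop) (f : V) (l : list (R * V)) : Prop :=
  Forall (fun p => 0 <= fst p /\ Hd (snd p)) l /\ f = comb l.

Definition inF {V : Hilbert} (Hd : V -> Prop) (f : V) : Prop :=
  exists l, is_rep Hd f l.

Definition is_inf (E : R -> Prop) (v : R) : Prop :=
  (forall x, E x -> v <= x) /\ (forall y, (forall x, E x -> y <= x) -> y <= v).

Definition is_vnorm {V : Hilbert} (Hd : V -> Prop) (f : V) (v : R) : Prop :=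
  is_inf (fun s => exists l, is_rep Hd f l /\ s = coef_sum l) v.

Definition convex_fun (w : R -> R) : Prop :=
  forall x y t, 0 <= t <= 1 -> w (t * x + (1 - t) * y) <= t * w x + (1 - t) * w y.

Definition dictionary {V : Hilbert} (Hd : V -> Prop) : Prop :=
  (forall h, Hd h -> hnorm h <= 1) /\ (forall h, Hd h -> Hd (hopp h)) /\ Hd hzero.

Definition greedy_obj {V : Hilbert} (w : R -> R) (fstar fprev h : V) (vprev a b : R) : R :=
  hnorm (hsub fstar (hadd (hscal (1 - a) fprev) (hscal b h))) ^ 2
  + w ((1 - a) * vprev + b).

(* The greedy scheme: sequences fs, vs, hs, al, be (index m >= 1 meaningful). *)
Definition greedy_scheme {V : Hilbert} (Hd : V -> Prop) (w : R -> R) (c : R) (fstar : V)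
  (fs : nat -> V) (vs : nat -> R) (hs : nat -> V) (al be : nat -> R) : Prop :=
  fs 0%nat = hzero /\ vs 0%nat = 0 /\
  forall m : nat, (1 <= m)%nat ->
    Hd (hs m) /\
    (forall h, Hd h -> (1 / c) * hinner h (hsub fstar (fs (m - 1)%nat))
                         <= hinner (hs m) (hsub fstar (fs (m - 1)%nat))) /\
    0 <= al m <= 1 /\ 0 <= be m /\
    (forall a b, 0 <= a <= 1 -> 0 <= b ->
       greedy_obj w fstar (fs (m - 1)%nat) (hs m) (vs (m - 1)%nat) (al m) (be m)
       <= greedy_obj w fstar (fs (m - 1)%nat) (hs m) (vs (m - 1)%nat) a b) /\
    fs m = hadd (hscal (1 - al m) (fs (m - 1)%nat)) (hscal (be m) (hs m)) /\
    vs m = (1 - al m) * vs (m - 1)%nat + be m.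

(* Write r = f* - f_{m-1}, h = h_m and b = c v_f.  The candidate (1-a) f_{m-1} + a b h
   is admissible in the m-th minimisation, and since <f, r> <= b <h, r> (selection rule
   plus the definition of v_f), expanding the square gives
     e_m <= (1-a) e_{m-1} + a (|f* - f|^2 + w(c v_f)) + a^2 (|f* - b h|^2 - |f* - f|^2),
   where e_k = |f* - f_k|^2 + w(v_k) and w is handled by convexity.  The last bracket is
   bounded either crudely (first bound) or by Young's inequality (second bound), and the
   step size a = 2/(m+1) turns the recursion into a 1/m rate.  Optimising the second
   bound over delta gives the third. *)
From Stdlib Require Import Reals Lra Lia List.
Open Scope R_scope.

Section InnerProduct.
Variable V : Hilbert.
Implicit Types x y z : V.

Lemma inner_zero_l y : hinner (@hzero V) y = 0.
Proof. pose proof (hinner_add_l V hzero hzero y) as H. rewrite hadd_zero in H. lra. Qed.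

Lemma inner_zero_r x : hinner x (@hzero V) = 0.
Proof. rewrite hinner_sym. apply inner_zero_l. Qed.

Lemma inner_opp_l x y : hinner (hopp x) y = - hinner x y.
Proof.
  pose proof (hinner_add_l V x (hopp x) y) as H.
  rewrite hadd_opp, inner_zero_l in H. lra.
Qed.

Lemma inner_opp_r x y : hinner x (hopp y) = - hinner x y.
Proof. rewrite !(hinner_sym V x). apply inner_opp_l. Qed.

Lemma inner_add_r x y z : hinner x (hadd y z) = hinner x y + hinner x z.
Proof. rewrite !(hinner_sym V x). apply hinner_add_l. Qed.

Lemma inner_scal_r a x y : hinner x (hscal a y) = a * hinner x y.
Proof. rewrite !(hinner_sym V x). apply hinner_scal_l. Qed.

Lemma hnorm_ge0 x : 0 <= hnorm x.
Proof. apply sqrt_pos. Qed.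

Lemma hnorm_sq x : hnorm x ^ 2 = hinner x x.
Proof. apply pow2_sqrt, hinner_pos. Qed.

Lemma hnorm_le_of_sq x r : 0 <= r -> hinner x x <= r ^ 2 -> hnorm x <= r.
Proof. intros Hr Hx. rewrite <- hnorm_sq in Hx. pose proof (hnorm_ge0 x). nra. Qed.

Lemma hnorm_opp x : hnorm (hopp x) = hnorm x.
Proof. unfold hnorm. rewrite inner_opp_l, inner_opp_r, Ropp_involutive. reflexivity. Qed.

Lemma hnorm_scal a x : hnorm (hscal a x) = Rabs a * hnorm x.
Proof.
  unfold hnorm. rewrite hinner_scal_l, inner_scal_r, <- Rmult_assoc.
  rewrite sqrt_mult_alt by nra. rewrite <- sqrt_Rsqr_abs. reflexivity.
Qed.

Lemma inner_le_hnorm x y : hinner x y <= hnorm x * hnorm y.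
Proof.
  set (nx := hnorm x). set (ny := hnorm y).
  assert (Hxx : hinner x x = nx ^ 2) by (symmetry; apply hnorm_sq).
  assert (Hyy : hinner y y = ny ^ 2) by (symmetry; apply hnorm_sq).
  (* |ny x - nx y|^2 = 2 nx ny (nx ny - <x,y>) *)
  pose proof (hinner_pos V (hadd (hscal ny x) (hopp (hscal nx y)))) as Hpos.
  repeat progress rewrite ?hinner_add_l, ?inner_add_r, ?inner_opp_l, ?inner_opp_r,
    ?hinner_scal_l, ?inner_scal_r in Hpos.
  rewrite (hinner_sym V y x), Hxx, Hyy in Hpos.
  pose proof (hnorm_ge0 x). pose proof (hnorm_ge0 y).
  assert (Hprod : nx * ny * hinner x y <= (nx * ny) * (nx * ny)) by nra.
  destruct (Rle_lt_or_eq_dec 0 (nx * ny)) as [Hp | Hzero];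
    [apply Rmult_le_pos; assumption | exact (Rmult_le_reg_l _ _ _ Hp Hprod) |].
  destruct (Rmult_integral _ _ (eq_sym Hzero)) as [Hx | Hy].
  - rewrite (hinner_def V x) by (rewrite Hxx, Hx; ring). rewrite inner_zero_l. lra.
  - rewrite (hinner_def V y) by (rewrite Hyy, Hy; ring). rewrite inner_zero_r. lra.
Qed.

Lemma inner_ge_neg_hnorm x y : - (hnorm x * hnorm y) <= hinner x y.
Proof. pose proof (inner_le_hnorm (hopp x) y). rewrite inner_opp_l, hnorm_opp in H. lra. Qed.

Lemma hnorm_add_le x y : hnorm (hadd x y) <= hnorm x + hnorm y.
Proof.
  pose proof (hnorm_ge0 x). pose proof (hnorm_ge0 y).
  apply hnorm_le_of_sq; [lra|].
  rewrite hinner_add_l, !inner_add_r, (hinner_sym V y x), <- !hnorm_sq.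
  pose proof (inner_le_hnorm x y). nra.
Qed.

Lemma hnorm_sub_le x y : hnorm (hsub x y) <= hnorm x + hnorm y.
Proof. unfold hsub. rewrite <- (hnorm_opp y). apply hnorm_add_le. Qed.

End InnerProduct.

Ltac expand_inner :=
  unfold hsub; rewrite ?hnorm_sq;
  repeat progress rewrite ?hinner_add_l, ?inner_add_r, ?hinner_scal_l, ?inner_scal_r,
    ?inner_opp_l, ?inner_opp_r, ?inner_zero_l, ?inner_zero_r.

(* Identify [hinner y x] with [hinner x y] wherever both occur in the goal. *)
Ltac normalize_inner_sym :=
  repeat match goal with
  | |- context [hinner ?x ?y] =>
      tryif constr_eq x y then fail else
      match goal with |- context [hinner y x] => rewrite (hinner_sym _ y x) end
  end.

Lemma hnorm_sub_triangle (V : Hilbert) (x y z : V) :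
  hnorm (hsub x z) <= hnorm (hsub x y) + hnorm (hsub y z).
Proof.
  assert (E : hinner (hsub x z) (hsub x z)
              = hinner (hadd (hsub x y) (hsub y z)) (hadd (hsub x y) (hsub y z))).
  { expand_inner. normalize_inner_sym. ring. }
  unfold hnorm at 1. rewrite E. apply hnorm_add_le.
Qed.

Section Dictionary.
Variables (V : Hilbert) (Hd : V -> Prop).

Definition admissible (l : list (R * V)) : Prop :=
  Forall (fun p => 0 <= fst p /\ Hd (snd p)) l.

Lemma coef_sum_ge0 l : admissible l -> 0 <= coef_sum l.
Proof.
  induction l as [|[b h] l IH]; intros Hl; simpl; [lra|].
  inversion Hl as [|? ? [Hb _] Hl']; subst. simpl in *. specialize (IH Hl'). lra.
Qed.

Lemma hnorm_comb_le l :
  (forall h, Hd h -> hnorm h <= 1) -> admissible l -> hnorm (comb l) <= coef_sum l.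
Proof.
  intros Hn. induction l as [|[b h] l IH]; intros Hl; simpl.
  - apply hnorm_le_of_sq; [lra|]. rewrite inner_zero_l. lra.
  - inversion Hl as [|? ? [Hb Hh] Hl']; subst. simpl in *.
    eapply Rle_trans; [apply hnorm_add_le|].
    rewrite hnorm_scal, Rabs_pos_eq by exact Hb.
    pose proof (Hn h Hh). pose proof (hnorm_ge0 V h). specialize (IH Hl'). nra.
Qed.

Lemma inner_comb_le l r K :
  (forall h, Hd h -> hinner h r <= K) -> admissible l -> hinner (comb l) r <= coef_sum l * K.
Proof.
  intros HK. induction l as [|[b h] l IH]; intros Hl; simpl.
  - rewrite inner_zero_l. lra.
  - inversion Hl as [|? ? [Hb Hh] Hl']; subst. simpl in *. specialize (IH Hl').
    rewrite hinner_add_l, hinner_scal_l. specialize (HK h Hh). nra.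
Qed.

Variables (f : V) (vf : R).
Hypothesis Hvf : is_vnorm Hd f vf.

Lemma vnorm_ge0 : 0 <= vf.
Proof. apply (proj2 Hvf). intros x [l [[Hl _] ->]]. exact (coef_sum_ge0 l Hl). Qed.

Lemma hnorm_le_vnorm : dictionary Hd -> hnorm f <= vf.
Proof.
  intros [Hn _]. apply (proj2 Hvf). intros x [l [[Hl ->] ->]]. exact (hnorm_comb_le l Hn Hl).
Qed.

Lemma inner_le_vnorm r K :
  inF Hd f -> 0 <= K -> (forall h, Hd h -> hinner h r <= K) -> hinner f r <= vf * K.
Proof.
  intros [l0 [Hl0 ->]] HK0 HK. destruct (Rle_lt_or_eq_dec 0 K HK0) as [HK1 | <-].
  - (* <f, r> / K is a lower bound for the admissible coefficient sums *)
    assert (Hlow : hinner (comb l0) r / K <= vf).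
    { apply (proj2 Hvf). intros x [l [[Hl Hfl] ->]]. rewrite Hfl.
      pose proof (inner_comb_le l r K HK Hl).
      apply Rmult_le_reg_r with K; [lra|]. field_simplify; lra. }
    apply Rmult_le_reg_r with (/ K); [apply Rinv_0_lt_compat; lra|].
    replace (vf * K * / K) with vf by (field; lra). exact Hlow.
  - pose proof (inner_comb_le l0 r 0 HK Hl0). lra.
Qed.

End Dictionary.

Lemma selected_dominates (V : Hilbert) (Hd : V -> Prop) (c : R) (g r : V) :
  0 < c -> Hd hzero -> (forall h, Hd h -> 1 / c * hinner h r <= hinner g r) ->
  0 <= hinner g r /\ forall h, Hd h -> hinner h r <= c * hinner g r.
Proof.
  intros Hc H0 Hsel. split.
  - pose proof (Hsel hzero H0) as Hz. rewrite inner_zero_l in Hz. lra.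
  - intros h Hh. pose proof (Hsel h Hh) as Hgh.
    apply Rmult_le_reg_l with (1 / c); [apply Rdiv_lt_0_compat; lra|].
    replace (1 / c * (c * hinner g r)) with (hinner g r) by (field; lra). exact Hgh.
Qed.

Section OneStep.
Variables (V : Hilbert) (x P H f : V) (a b : R).

(* The defect of the bound is a (1-a) (|f - P|^2 + 2 (b<H,r> - <f,r>)) with r = x - P. *)
Lemma relaxed_step_le :
  0 <= a <= 1 -> hinner f (hsub x P) <= b * hinner H (hsub x P) ->
  hnorm (hsub x (hadd (hscal (1 - a) P) (hscal (a * b) H))) ^ 2
  <= (1 - a) * hnorm (hsub x P) ^ 2 + a * hnorm (hsub x f) ^ 2
     + a ^ 2 * (hnorm (hsub x (hscal b H)) ^ 2 - hnorm (hsub x f) ^ 2).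
Proof.
  intros Ha Hsel.
  assert (Hdom : 0 <= a * (1 - a) * (b * hinner H (hsub x P) - hinner f (hsub x P)))
    by (apply Rmult_le_pos; nra).
  assert (Hfp : 0 <= a * (1 - a) * hinner (hsub f P) (hsub f P))
    by (apply Rmult_le_pos; [nra | apply hinner_pos]).
  revert Hdom Hfp. expand_inner. normalize_inner_sym. intros. lra.
Qed.

Lemma excess_le_crude (v : R) :
  0 <= b -> hnorm H <= 1 -> hnorm f <= v ->
  hnorm (hsub x (hscal b H)) ^ 2 - hnorm (hsub x f) ^ 2
  <= b ^ 2 + 2 * (b + v) * hnorm x - hnorm f ^ 2.
Proof.
  intros Hb HH Hf.
  pose proof (inner_ge_neg_hnorm V x H). pose proof (inner_le_hnorm V x f).
  pose proof (hnorm_ge0 V x). pose proof (hnorm_ge0 V H). pose proof (hnorm_ge0 V f).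
  assert (HHH : hinner H H <= 1) by (rewrite <- hnorm_sq; nra).
  assert (hnorm x * hnorm H <= hnorm x) by nra.
  assert (hnorm x * hnorm f <= hnorm x * v) by nra.
  expand_inner. normalize_inner_sym. nra.
Qed.

Lemma excess_le_young (d s : R) :
  0 < d -> hnorm (hsub f (hscal b H)) <= s ->
  hnorm (hsub x (hscal b H)) ^ 2 - hnorm (hsub x f) ^ 2
  <= d * hnorm (hsub x f) ^ 2 + (1 + / d) * s ^ 2.
Proof.
  intros Hd Hs.
  pose proof (hnorm_sub_triangle V x f (hscal b H)) as Htri.
  pose proof (hnorm_ge0 V (hsub x (hscal b H))).
  set (p := hnorm (hsub x f)) in *. set (q := hnorm (hsub f (hscal b H))) in *.
  assert (Hq : 0 <= q) by apply hnorm_ge0.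
  (* Young: (p + q)^2 <= (1 + d) p^2 + (1 + 1/d) q^2, the gap being (d p - q)^2 / d *)
  assert (Hyoung : 0 <= (d * p - q) ^ 2 / d)
    by (apply Rle_mult_inv_pos; [apply pow2_ge_0 | lra]).
  replace ((d * p - q) ^ 2 / d) with (d * p ^ 2 - 2 * p * q + / d * q ^ 2) in Hyoung
    by (field; lra).
  assert (Hq2 : q ^ 2 <= s ^ 2) by nra.
  assert (/ d * q ^ 2 <= / d * s ^ 2)
    by (apply Rmult_le_compat_l; [left; apply Rinv_0_lt_compat |]; lra).
  assert (hnorm (hsub x (hscal b H)) ^ 2 <= (p + q) ^ 2) by (apply pow_incr; lra).
  lra.
Qed.

End OneStep.

Lemma relaxed_step_size_le (x T B : R) :
  0 < x -> 0 <= B ->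
  (1 - 2 / (x + 2)) * (T + 4 * B / x) + 2 / (x + 2) * T + (2 / (x + 2)) ^ 2 * B
  <= T + 4 * B / (x + 1).
Proof.
  intros Hx HB.
  assert (Hgap : 0 <= 4 * B / ((x + 1) * (x + 2) ^ 2))
    by (apply Rle_mult_inv_pos; [lra | apply Rmult_lt_0_compat; nra]).
  replace (T + 4 * B / (x + 1)) with
    ((1 - 2 / (x + 2)) * (T + 4 * B / x) + 2 / (x + 2) * T + (2 / (x + 2)) ^ 2 * B
     + 4 * B / ((x + 1) * (x + 2) ^ 2)) by (field; lra).
  lra.
Qed.

(* Choosing a = 2/(m+1) at step m, as in Jones' relaxed greedy algorithm. *)
Lemma relaxed_recursion_rate (e : nat -> R) (T B : R) :
  0 <= B ->
  (forall k a, 0 <= a <= 1 -> e (S k) <= (1 - a) * e k + a * T + a ^ 2 * B) ->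
  forall m, e (S m) <= T + 4 * B / INR (S m).
Proof.
  intros HB Hstep. induction m as [|m IH].
  - specialize (Hstep 0%nat 1 ltac:(lra)). simpl INR.
    replace (4 * B / 1) with (4 * B) by field. lra.
  - set (x := INR (S m)) in *.
    assert (Hx : 0 < x) by (apply lt_0_INR; lia).
    assert (Ha : 0 <= 2 / (x + 2) <= 1).
    { split; [apply Rle_mult_inv_pos; lra|].
      apply Rmult_le_reg_r with (x + 2); [lra|]. field_simplify; lra. }
    specialize (Hstep (S m) _ Ha).
    rewrite S_INR. fold x.
    assert ((1 - 2 / (x + 2)) * e (S m) <= (1 - 2 / (x + 2)) * (T + 4 * B / x))
      by (apply Rmult_le_compat_l; lra).
    pose proof (relaxed_step_size_le x T B Hx HB). lra.
Qed.

Lemma le_twice_mul_of_young (z D s : R) :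
  0 <= D -> 0 <= s -> (forall d, 0 < d -> z <= d * D ^ 2 + s ^ 2 / d) -> z <= 2 * D * s.
Proof.
  intros HD Hs Hz.
  destruct (Rle_lt_or_eq_dec 0 D HD) as [Dp | <-];
    destruct (Rle_lt_or_eq_dec 0 s Hs) as [sp | <-].
  - specialize (Hz (s / D) ltac:(apply Rdiv_lt_0_compat; lra)).
    replace (s / D * D ^ 2 + s ^ 2 / (s / D)) with (2 * D * s) in Hz by (field; lra). lra.
  - destruct (Rle_or_lt z 0); [nra|].
    specialize (Hz (z / (2 * D ^ 2)) ltac:(apply Rdiv_lt_0_compat; nra)).
    replace (z / (2 * D ^ 2) * D ^ 2 + 0 ^ 2 / (z / (2 * D ^ 2))) with (z / 2) in Hz
      by (field; lra). lra.
  - destruct (Rle_or_lt z 0); [nra|].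
    specialize (Hz (2 * s ^ 2 / z) ltac:(apply Rdiv_lt_0_compat; nra)).
    replace (2 * s ^ 2 / z * 0 ^ 2 + s ^ 2 / (2 * s ^ 2 / z)) with (z / 2) in Hz
      by (field; nra). lra.
  - specialize (Hz 1 ltac:(lra)). lra.
Qed.

Section GreedyScheme.
Variables (V : Hilbert) (Hd : V -> Prop) (w : R -> R) (c : R) (fstar : V)
  (fs : nat -> V) (vs : nat -> R) (hs : nat -> V) (al be : nat -> R) (f : V) (vf : R).
Hypotheses (Hdict : dictionary Hd) (Hconv : convex_fun w) (Hc : 1 <= c)
  (Hscheme : greedy_scheme Hd w c fstar fs vs hs al be)
  (HfF : inF Hd f) (Hvf : is_vnorm Hd f vf).

Local Notation err k := (hnorm (hsub fstar (fs k)) ^ 2 + w (vs k)).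
Local Notation dist := (hnorm (hsub fstar f)).

Lemma greedy_step_le k a :
  0 <= a <= 1 ->
  err (S k) <= (1 - a) * err k + a * (dist ^ 2 + w (c * vf))
               + a ^ 2 * (hnorm (hsub fstar (hscal (c * vf) (hs (S k)))) ^ 2 - dist ^ 2).
Proof.
  intros Ha. destruct Hscheme as [_ [_ Hstep]].
  destruct (Hstep (S k) ltac:(lia)) as [Hh [Hsel [_ [_ [Hmin [Hf Hv]]]]]].
  replace (S k - 1)%nat with k in * by lia.
  pose proof (vnorm_ge0 V Hd f vf Hvf) as Hvf0.
  destruct (selected_dominates V Hd c (hs (S k)) (hsub fstar (fs k)))
    as [Hpos Hdom]; [lra | apply Hdict | exact Hsel |].
  assert (Hsel_f : hinner f (hsub fstar (fs k))
                   <= c * vf * hinner (hs (S k)) (hsub fstar (fs k))).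
  { pose proof (inner_le_vnorm V Hd f vf Hvf (hsub fstar (fs k))
                  (c * hinner (hs (S k)) (hsub fstar (fs k))) HfF ltac:(nra) Hdom).
    lra. }
  pose proof (relaxed_step_le V fstar (fs k) (hs (S k)) f a (c * vf) Ha Hsel_f) as Hgeom.
  assert (Hcv : 0 <= c * vf) by (apply Rmult_le_pos; lra).
  specialize (Hmin a (a * (c * vf)) Ha ltac:(apply Rmult_le_pos; lra)).
  unfold greedy_obj in Hmin.
  pose proof (Hconv (vs k) (c * vf) (1 - a) ltac:(lra)) as Hw.
  replace (1 - (1 - a)) with a in Hw by ring.
  rewrite Hf, Hv. lra.
Qed.

Lemma greedy_rate_crude m :
  err (S m) <= dist ^ 2 + w (c * vf)
    + 4 * (c ^ 2 * vf ^ 2 + 2 * vf * hnorm fstar * (c + 1) - hnorm f ^ 2) / INR (S m).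
Proof.
  pose proof (vnorm_ge0 V Hd f vf Hvf). pose proof (hnorm_le_vnorm V Hd f vf Hvf Hdict).
  pose proof (hnorm_ge0 V f). pose proof (hnorm_ge0 V fstar).
  assert (Hcv : 0 <= c * vf) by (apply Rmult_le_pos; lra).
  apply (relaxed_recursion_rate (fun k => err k)).
  - assert (hnorm f ^ 2 <= (c * vf) ^ 2) by (apply pow_incr; nra).
    assert (0 <= vf * hnorm fstar * (c + 1))
      by (apply Rmult_le_pos; [apply Rmult_le_pos |]; lra).
    nra.
  - intros k a Ha. pose proof (greedy_step_le k a Ha).
    destruct Hscheme as [_ [_ Hstep]]. destruct (Hstep (S k) ltac:(lia)) as [Hh _].
    pose proof (excess_le_crude V fstar (hs (S k)) f (c * vf) vf Hcv
                  (proj1 Hdict _ Hh) ltac:(lra)) as Hex.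
    apply (Rmult_le_compat_l (a ^ 2)) in Hex; [|apply pow2_ge_0].
    lra.
Qed.

Lemma greedy_rate_young m d :
  0 < d ->
  err (S m) <= (1 + d) * dist ^ 2 + w (c * vf)
    + 4 * (1 + d) / d * (c + 1) ^ 2 * vf ^ 2 / INR (S m).
Proof.
  intros Hdelta. pose proof (vnorm_ge0 V Hd f vf Hvf) as Hvf0.
  pose proof (hnorm_le_vnorm V Hd f vf Hvf Hdict). pose proof (hnorm_ge0 V (hsub fstar f)).
  assert (Hcv : 0 <= c * vf) by (apply Rmult_le_pos; lra).
  assert (Hinv : 0 < / d) by (apply Rinv_0_lt_compat; lra).
  replace (4 * (1 + d) / d * (c + 1) ^ 2 * vf ^ 2 / INR (S m))
    with (4 * ((1 + / d) * ((c + 1) * vf) ^ 2) / INR (S m))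
    by (field; split; [lra | apply not_0_INR; lia]).
  apply (relaxed_recursion_rate (fun k => err k)).
  { apply Rmult_le_pos; [lra | apply pow2_ge_0]. }
  intros k a Ha. pose proof (greedy_step_le k a Ha).
  destruct Hscheme as [_ [_ Hstep]]. destruct (Hstep (S k) ltac:(lia)) as [Hh _].
  assert (Hfar : hnorm (hsub f (hscal (c * vf) (hs (S k)))) <= (c + 1) * vf).
  { eapply Rle_trans; [apply hnorm_sub_le|].
    rewrite hnorm_scal, Rabs_pos_eq by exact Hcv.
    pose proof (proj1 Hdict _ Hh). pose proof (hnorm_ge0 V (hs (S k))). nra. }
  pose proof (excess_le_young V fstar (hs (S k)) f (c * vf) d _ Hdelta Hfar) as Hex.
  apply (Rmult_le_compat_l (a ^ 2)) in Hex; [|apply pow2_ge_0].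
  assert (a ^ 2 * (d * dist ^ 2) <= a * (d * dist ^ 2))
    by (apply Rmult_le_compat_r; nra).
  lra.
Qed.

Lemma greedy_rate_sqrt m :
  err (S m) <= (dist + 2 * (c + 1) * vf / sqrt (INR (S m))) ^ 2 + w (c * vf).
Proof.
  pose proof (vnorm_ge0 V Hd f vf Hvf).
  assert (Hm : 0 < INR (S m)) by (apply lt_0_INR; lia).
  pose proof (sqrt_lt_R0 _ Hm).
  set (s := 2 * (c + 1) * vf / sqrt (INR (S m))).
  assert (Hs0 : 0 <= s) by (apply Rle_mult_inv_pos; nra).
  assert (Hs2 : s ^ 2 = 4 * (c + 1) ^ 2 * vf ^ 2 / INR (S m)).
  { unfold s. rewrite <- (pow2_sqrt (INR (S m))) at 2 by lra. field. lra. }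
  enough (err (S m) - dist ^ 2 - w (c * vf) - s ^ 2 <= 2 * dist * s) by lra.
  apply le_twice_mul_of_young; [apply hnorm_ge0 | exact Hs0 |].
  intros d Hdelta. pose proof (greedy_rate_young m d Hdelta) as Hy.
  replace (4 * (1 + d) / d * (c + 1) ^ 2 * vf ^ 2 / INR (S m)) with (s ^ 2 + s ^ 2 / d) in Hy
    by (rewrite Hs2; field; lra).
  lra.
Qed.

End GreedyScheme.

Theorem theorem1 (V : Hilbert) (Hd : V -> Prop) (w : R -> R) (c : R) (fstar : V)
  (fs : nat -> V) (vs : nat -> R) (hs : nat -> V) (al be : nat -> R) :
  dictionary Hd ->
  convex_fun w -> (forall x, 0 <= w x) ->
  1 <= c ->
  greedy_scheme Hd w c fstar fs vs hs al be ->
  forall m : nat, (1 <= m)%nat ->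
  forall (f : V) (vf : R), inF Hd f -> is_vnorm Hd f vf ->
    (hnorm (hsub fstar (fs m)) ^ 2 + w (vs m)
       <= hnorm (hsub fstar f) ^ 2 + w (c * vf)
          + 4 * (c ^ 2 * vf ^ 2 + 2 * vf * hnorm fstar * (c + 1) - hnorm f ^ 2) / INR m)
    /\
    (forall delta, 0 < delta ->
       hnorm (hsub fstar (fs m)) ^ 2 + w (vs m)
       <= (1 + delta) * hnorm (hsub fstar f) ^ 2 + w (c * vf)
          + 4 * (1 + delta) / delta * (c + 1) ^ 2 * vf ^ 2 / INR m)
    /\
    (hnorm (hsub fstar (fs m)) ^ 2 + w (vs m)
       <= (hnorm (hsub fstar f) + 2 * (c + 1) * vf / sqrt (INR m)) ^ 2 + w (c * vf)).
Proof.
  intros Hdict Hconv _ Hc Hscheme [|m] Hm f vf HfF Hvf; [lia|].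
  split; [|split].
  - exact (greedy_rate_crude V Hd w c fstar fs vs hs al be f vf
             Hdict Hconv Hc Hscheme HfF Hvf m).
  - intros d Hd0.
    exact (greedy_rate_young V Hd w c fstar fs vs hs al be f vf
             Hdict Hconv Hc Hscheme HfF Hvf m d Hd0).
  - exact (greedy_rate_sqrt V Hd w c fstar fs vs hs al be f vf
             Hdict Hconv Hc Hscheme HfF Hvf m).
Qed.
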